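(* Let $R$ be a P$v$MD and let $P$ be a $t$-prime ideal of $R$. The following conditions are equivalent: (i) $P$ is branched; (ii) $P$ is a minimal prime of a principal ideal of $R$; (iii) $P$ is a minimal prime of a finitely generated ideal of $R$; (iv) $P$ is a minimal prime of a $v$-finite divisorial ideal of $R$; (v) $P$ is not the union of the set of prime ideals of $R$ properly contained in $P$.
   Context: $R$ is an integral domain with quotient field $K\neq R$. For nonzero $R$-submodules $A,B$ of $K$, $(A:B)=\{x\in K: xB\subseteq A\}$. For a nonzero fractional ideal $I$, $I_v=(R:(R:I))$ and $I_t=\bigcup\{J_v: J\subseteq I \text{ nonzero finitely generated}\}$. $I$ is divisorial if $I=I_v$ and a $t$-ideal if $I=I_t$; a $v$-finite divisorial ideal is an ideal of the form $J_v$ with $J$ finitely generated. A $t$-prime is a prime $t$-ideal; a $t$-maximal ideal is an ideal maximal among proper $t$-ideals (it is prime). $R$ is a P$v$MD (Prüfer $v$-multiplication domain) if $R_M$ is a valuation domain for every $t$-maximal ideal $M$. A prime ideal $P$ is branched if there exists a $P$-primary ideal different from $P$. *)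

From HB Require Import structures.
From mathcomp Require Import all_boot all_order all_algebra.
Set Implicit Arguments. Unset Strict Implicit. Unset Printing Implicit Defensive.
Import Order.TTheory GRing.Theory Num.Theory.
Local Open Scope ring_scope.

Section Defs.
Variable R : idomainType.
Local Notation K := {fraction R}.
Local Notation "x %:F" := (@FracField.tofrac R x).

Definition Rsub : K -> Prop := fun x => exists r : R, x = r%:F.

Definition colon (A B : K -> Prop) : K -> Prop :=
  fun x => forall b, B b -> A (x * b).

Definition vop (A : K -> Prop) : K -> Prop := colon Rsub (colon Rsub A).

Definition Kgen (l : seq K) : K -> Prop :=
  fun x => exists c : seq R, x = \sum_(i < size l) (c`_i)%:F * l`_i.

Definition t_closure (A : K -> Prop) : K -> Prop :=
  fun x => exists l : seq K,
    (forall y, y \in l -> A y) /\ has (fun y => y != 0) l /\ vop (Kgen l) x.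

Definition set_eq (T : Type) (A B : T -> Prop) := forall x, A x <-> B x.

Definition is_ideal (I : R -> Prop) : Prop :=
  [/\ I 0, (forall a b, I a -> I b -> I (a + b)) & (forall r a, I a -> I (r * a))].

Definition is_prime (P : R -> Prop) : Prop :=
  [/\ is_ideal P, ~ P 1 & (forall a b, P (a * b) -> P a \/ P b)].

Definition ext_ideal (I : R -> Prop) : K -> Prop := fun x => exists r, I r /\ x = r%:F.

Definition t_ideal (I : R -> Prop) : Prop := set_eq (ext_ideal I) (t_closure (ext_ideal I)).

Definition nonzero (I : R -> Prop) : Prop := exists a, I a /\ a != 0.

Definition t_prime (P : R -> Prop) : Prop := [/\ is_prime P, nonzero P & t_ideal P].

Definition proper_t_ideal (I : R -> Prop) : Prop :=
  [/\ is_ideal I, nonzero I, ~ I 1 & t_ideal I].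

Definition t_maximal (M : R -> Prop) : Prop :=
  proper_t_ideal M /\
  (forall J, proper_t_ideal J -> (forall x, M x -> J x) -> set_eq J M).

Definition localization (P : R -> Prop) : K -> Prop :=
  fun x => exists a s : R, ~ P s /\ x = a%:F / s%:F.

(* a subring V of K with quotient field K is a valuation domain *)
Definition valuation_subring (V : K -> Prop) : Prop :=
  forall x : K, x != 0 -> V x \/ V x^-1.

Definition PvMD : Prop :=
  forall M, t_maximal M -> valuation_subring (localization M).

Definition radical_is (Q P : R -> Prop) : Prop :=
  forall x, P x <-> exists n, Q (x ^+ n).

Definition is_primary (Q : R -> Prop) : Prop :=
  [/\ is_ideal Q, ~ Q 1 &
      (forall a b, Q (a * b) -> ~ Q a -> exists n, Q (b ^+ n))].

Definition P_primary (P Q : R -> Prop) : Prop := is_primary Q /\ radical_is Q P.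

Definition branched (P : R -> Prop) : Prop :=
  exists Q, P_primary P Q /\ ~ set_eq Q P.

Definition minimal_prime_of (I P : R -> Prop) : Prop :=
  [/\ is_prime P, (forall x, I x -> P x) &
      (forall Q, is_prime Q -> (forall x, I x -> Q x) -> (forall x, Q x -> P x) ->
                 set_eq Q P)].

Definition principal_ideal (a : R) : R -> Prop := fun x => exists r, x = r * a.

Definition Rgen (l : seq R) : R -> Prop :=
  fun x => exists c : seq R, x = \sum_(i < size l) c`_i * l`_i.


Definition v_finite_divisorial (I : R -> Prop) : Prop :=
  exists l : seq K, has (fun y => y != 0) l /\
    set_eq (ext_ideal I) (vop (Kgen l)).

Definition strict_subset (Q P : R -> Prop) : Prop :=
  (forall x, Q x -> P x) /\ exists x, P x /\ ~ Q x.

End Defs.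

(* Everything happens in R_P, a valuation domain since P lies in a t-maximal
   ideal M (Zorn's lemma) and R_P is a localization of R_M.
   - A prime strictly inside P lies in every P-primary ideal, since ideals of
     R_P are totally ordered; so a branched P is not the union of the smaller
     primes.
   - If P is minimal over (a) and x is in P, then some x^n lies in a^2 R_P:
     otherwise the prime ideal of elements divisible in R_P by every power of x
     contains a, so equals P by minimality, and x in x^2 R_P is absurd. Hence
     a^2 R_P /\ R is P-primary, and it does not contain a.
   - If P is minimal over J_v with J = (a_1, ..., a_n), take a_i dividing all
     a_j in R_P; then s / a_i is in (R : J) for some s outside P, so
     s J_v lies in (a_i), and P is minimal over (a_i).
   - An element of P outside all smaller primes generates an ideal over which
     P is minimal, and for J finitely generated J_v lies in P_t = P. *)

From HB Require Import structures.
From mathcomp Require Import all_boot all_order all_algebra.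
From mathcomp Require Import ring.
From mathcomp Require boolp classical_sets.
From Stdlib Require Import Classical.
Set Implicit Arguments.
Unset Strict Implicit.
Import GRing.Theory.
Local Open Scope ring_scope.

Section PrimeIdeals.
Variable R : idomainType.
Implicit Types (I J P Q : R -> Prop) (a b x y : R).

Lemma prime_mem_expr Q y n : is_prime Q -> Q (y ^+ n) -> Q y.
Proof.
case=> _ Q1 Qmul; elim: n => [|n IHn]; first by rewrite expr0.
by rewrite exprS => /Qmul [].
Qed.

Lemma prime_nmul Q s t : is_prime Q -> ~ Q s -> ~ Q t -> ~ Q (s * t).
Proof. by case=> _ _ Qmul Qs Qt /Qmul []. Qed.

Lemma is_prime0 : is_prime (fun x : R => x = 0).
Proof.
split; first split.
- by [].
- by move=> a b -> ->; rewrite addr0.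
- by move=> r a ->; rewrite mulr0.
- by move/eqP; rewrite oner_eq0.
- by move=> a b /eqP; rewrite mulf_eq0 => /orP [] /eqP; [left | right].
Qed.

Lemma minimal_prime_of_nonzero I P : minimal_prime_of I P -> nonzero P -> nonzero I.
Proof.
case=> Pprime IP Pmin [b [Pb b0]]; apply: NNPP => Izero.
have I0 : forall x, I x -> x = 0.
  by move=> x Ix; apply: NNPP => /eqP x0; apply: Izero; exists x.
have Pzero : set_eq (fun x => x = 0) P.
  by apply: Pmin => //; [exact: is_prime0 | move=> x ->; case: Pprime => [[]]].
by have [_ /(_ Pb) b_eq0] := Pzero b; rewrite b_eq0 eqxx in b0.
Qed.

Lemma minimal_prime_of_eq I J P :
  set_eq I J -> minimal_prime_of I P -> minimal_prime_of J P.
Proof.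
move=> IJ [Pprime IP Pmin]; split => // [x /IJ /IP // | Q Qprime JQ QP].
by apply: Pmin => // x /IJ /JQ.
Qed.

Lemma Rgen_mem (l : seq R) y : y \in l -> Rgen l y.
Proof.
elim: l => // z l IHl; rewrite inE => /orP [/eqP -> | yl].
  exists [:: 1]; rewrite big_ord_recl /= mul1r big1 ?addr0 // => i _.
  by rewrite nth_nil mul0r.
have [c ->] := IHl yl; exists (0 :: c).
by rewrite big_ord_recl /= mul0r add0r.
Qed.

Lemma Rgen_sub_ideal (l : seq R) J :
  is_ideal J -> (forall y, y \in l -> J y) -> forall x, Rgen l x -> J x.
Proof.
move=> [J0 JD JM] lJ x [c ->].
by apply: (big_ind J) => // i _; apply/JM/lJ/mem_nth.
Qed.

Lemma minimal_prime_principal_Rgen a P :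
  minimal_prime_of (principal_ideal a) P -> exists l, minimal_prime_of (Rgen l) P.
Proof.
move=> aP; exists [:: a]; apply: minimal_prime_of_eq aP => x.
split=> [[r ->] | [c ->]]; first by exists [:: r]; rewrite big_ord1.
by exists c`_0; rewrite big_ord1.
Qed.

Definition union_smaller_primes P : R -> Prop :=
  fun x => exists Q, is_prime Q /\ strict_subset Q P /\ Q x.

Lemma not_union_minimal_principal P : is_prime P ->
  ~ set_eq P (union_smaller_primes P) -> exists a, minimal_prime_of (principal_ideal a) P.
Proof.
move=> Pprime notU; have [[_ _ PM] _ _] := Pprime.
have [a [Pa Ua]] : exists a, P a /\ ~ union_smaller_primes P a.
  apply: NNPP => H; apply: notU => x; split=> [Px | [Q [_ [[QP _] Qx]]]].
    by apply: NNPP => Ux; apply: H; exists x.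
  exact: QP.
exists a; split => // [x [r ->] | Q Qprime Qa QP x]; first exact: PM.
split=> [/QP // | Px]; apply: NNPP => Qx; apply: Ua; exists Q.
by do !split => //; [exists x | apply: Qa; exists 1; rewrite mul1r].
Qed.

End PrimeIdeals.

Section DvdAt.
Variables (R : idomainType) (P : R -> Prop).
Hypothesis Pprime : is_prime P.
Implicit Types (Q : R -> Prop) (a b c x y : R).

(* [dvd_at P b x] says that [b] divides [x] in [R_P], so [dvd_at P b] is the
   contraction of [b R_P] to [R]; [valuation_at P] says that [R_P] is a
   valuation domain. *)
Definition dvd_at b x := exists t c, ~ P t /\ x * t = c * b.

Definition valuation_at := forall a b, dvd_at b a \/ dvd_at a b.

Lemma dvd_at_ideal b : is_ideal (dvd_at b).
Proof.
split.
- by exists 1, 0; split; [case: Pprime | rewrite !mul0r].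
- move=> x y [t [c [Pt Ex]]] [u [d [Pu Ey]]].
  exists (t * u), (c * u + d * t); split; first exact: prime_nmul.
  have -> : (x + y) * (t * u) = x * t * u + y * u * t by ring.
  by rewrite Ex Ey; ring.
- move=> r x [t [c [Pt Ex]]]; exists t, (r * c); split => //.
  by rewrite -mulrA Ex mulrA.
Qed.

Lemma dvd_at_refl b : dvd_at b b.
Proof. by exists 1, 1; split; [case: Pprime | rewrite mulr1 mul1r]. Qed.

Lemma dvd_at_sub {b x} : P b -> dvd_at b x -> P x.
Proof.
have [[_ _ PM] _ Pmul] := Pprime.
move=> Pb [t [c [Pt E]]].
by have /Pmul [] : P (x * t) by rewrite E; apply: PM.
Qed.

Lemma dvd_at_trans {a b c} : dvd_at a b -> dvd_at b c -> dvd_at a c.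
Proof.
move=> [t [d [Pt Eb]]] [u [e [Pu Ec]]].
exists (u * t), (e * d); split; first exact: prime_nmul.
by rewrite mulrA Ec -mulrA Eb mulrA.
Qed.

Lemma dvd_at_mul {a b c x} : dvd_at a b -> dvd_at c x -> dvd_at (a * c) (b * x).
Proof.
move=> [t [d [Pt Eb]]] [u [e [Pu Ex]]].
exists (t * u), (d * e); split; first exact: prime_nmul.
by rewrite mulrACA Eb Ex mulrACA.
Qed.

Lemma dvd_at_cancel {b x s} : ~ P s -> dvd_at b (x * s) -> dvd_at b x.
Proof.
move=> Ps [t [c [Pt E]]]; exists (s * t), c; split; first exact: prime_nmul.
by rewrite mulrA.
Qed.

Lemma not_dvd_at_exprS x n : x != 0 -> P x -> ~ dvd_at (x ^+ n.+1) (x ^+ n).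
Proof.
have [[_ _ PM] _ _] := Pprime.
move=> x0 Px [t [c [Pt E]]]; apply: Pt.
have -> : t = c * x by apply: (mulIf (expf_neq0 n x0)); rewrite mulrC E exprS; ring.
exact: PM.
Qed.

Lemma dvd_at_common a (l : seq R) : (forall b, b \in l -> dvd_at a b) ->
  exists s, ~ P s /\ forall b, b \in l -> exists c, s * b = c * a.
Proof.
elim: l => [|y l IHl] ldvd; first by exists 1; split => //; case: Pprime.
have [s [Ps Hs]] := IHl (fun b bl => ldvd b (mem_behead (bl : b \in behead (y :: l)))).
have [t [c [Pt Ey]]] := ldvd y (mem_head y l).
exists (s * t); split; first exact: prime_nmul.
move=> b; rewrite inE => /orP [/eqP -> | /Hs [d Eb]].
  by exists (s * c); rewrite -mulrA (mulrC t) Ey mulrA.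
by exists (t * d); rewrite mulrAC Eb; ring.
Qed.

Lemma dvd_at_primary b : P b -> (forall x, P x -> exists n, dvd_at b (x ^+ n)) ->
  P_primary P (dvd_at b).
Proof.
move=> Pb Prad; have [_ P1 _] := Pprime.
split; first split.
- exact: dvd_at_ideal.
- by move/(dvd_at_sub Pb).
- move=> x y xyQ xQ; apply: Prad; apply: NNPP => Py.
  by apply/xQ/(dvd_at_cancel Py).
- move=> x; split; first exact: Prad.
  by move=> [n /(dvd_at_sub Pb)]; apply: prime_mem_expr.
Qed.

End DvdAt.

Section ValuationAt.
Variables (R : idomainType) (P : R -> Prop).
Hypotheses (Pprime : is_prime P) (Pval : valuation_at P).
Implicit Types (Q : R -> Prop) (a b c x y : R).
Local Notation dvd_at := (dvd_at P).

Lemma ndvd_at_dvd_at a b : ~ dvd_at b a -> dvd_at a b.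
Proof. by case: (Pval a b). Qed.

Lemma exists_dvd_at_all (l : seq R) : l != [::] ->
  exists2 a, a \in l & forall b, b \in l -> dvd_at a b.
Proof.
elim: l => // y [|z l] IHl _.
  by exists y => [|b]; rewrite ?mem_head // inE => /eqP ->; exact: dvd_at_refl.
have [a al adiv] := IHl isT.
case: (Pval y a) => [ya | ay].
  exists a => [|b]; first by rewrite inE al orbT.
  by rewrite inE => /orP [/eqP -> | /adiv].
exists y => [|b]; first exact: mem_head.
rewrite inE => /orP [/eqP -> | /adiv]; first exact: dvd_at_refl.
exact: dvd_at_trans.
Qed.

Definition dvd_at_powers x : R -> Prop := fun y => forall n, dvd_at (x ^+ n) y.

Lemma dvd_at_powers_prime x : x != 0 -> P x -> is_prime (dvd_at_powers x).
Proof.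
move=> x0 Px; have [[_ _ PM] P1 _] := Pprime.
split; first split.
- by move=> n; case: (dvd_at_ideal Pprime (x ^+ n)).
- by move=> y z Hy Hz n; case: (dvd_at_ideal Pprime (x ^+ n)) => _ + _; apply.
- by move=> r y Hy n; case: (dvd_at_ideal Pprime (x ^+ n)) => _ _; apply.
- by move/(_ 1%N); rewrite expr1 => /(dvd_at_sub Pprime Px).
move=> y z yz; apply: NNPP => /not_or_and [/not_all_ex_not [i yi] /not_all_ex_not [j zj]].
have xy : dvd_at y (x ^+ i) := ndvd_at_dvd_at yi.
have xz : dvd_at z (x ^+ j) := ndvd_at_dvd_at zj.
have := dvd_at_trans Pprime (yz (i + j).+1) (dvd_at_mul Pprime xy xz).
by rewrite -exprD; apply: not_dvd_at_exprS.
Qed.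

Lemma dvd_at_powers_sub x y : P x -> dvd_at_powers x y -> P y.
Proof. by move=> Px /(_ 1%N); rewrite expr1; apply: dvd_at_sub. Qed.

Lemma minimal_prime_principal_radical a x :
  minimal_prime_of (principal_ideal a) P -> P x -> exists n, dvd_at (a ^+ 2) (x ^+ n).
Proof.
move=> [_ aP Pmin] Px; apply: NNPP => /not_ex_all_not xn.
have x0 : x != 0.
  apply/eqP => x0; apply: (xn 1%N); rewrite x0 expr1.
  by case: (dvd_at_ideal Pprime (a ^+ 2)).
have Nprime := dvd_at_powers_prime x0 Px.
have Na : dvd_at_powers x a.
  have Na2 : dvd_at_powers x (a * a) by rewrite -expr2 => n; apply/ndvd_at_dvd_at/xn.
  by case: Nprime => _ _ /(_ a a Na2) [].
have aN : forall y, principal_ideal a y -> dvd_at_powers x y.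
  by move=> y [r ->]; case: Nprime => [[_ _ NM] _ _]; apply: NM.
have [_ /(_ Px)] := Pmin _ Nprime aN (fun y => dvd_at_powers_sub Px) x.
by move/(_ 2%N); rewrite -[X in dvd_at _ X]expr1; apply: not_dvd_at_exprS.
Qed.

Lemma minimal_prime_principal_branched a :
  nonzero P -> minimal_prime_of (principal_ideal a) P -> branched P.
Proof.
move=> Pnz aP; have [[_ _ PM] _ _] := Pprime.
have [_ [[r ->] ra0]] := minimal_prime_of_nonzero aP Pnz.
have a0 : a != 0 by apply: contraNneq ra0 => ->; rewrite mulr0.
have Pa : P a by case: aP => _ + _; apply; exists 1; rewrite mul1r.
have Pa2 : P (a ^+ 2) by rewrite expr2; apply: PM.
exists (dvd_at (a ^+ 2)); split.
  by apply: dvd_at_primary => // x; apply: minimal_prime_principal_radical.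
move/(_ a) => [_ /(_ Pa)]; rewrite -[X in dvd_at _ X]expr1.
exact: not_dvd_at_exprS.
Qed.

Lemma prime_sub_primary Q Q' :
  is_prime Q -> strict_subset Q P -> P_primary P Q' -> forall x, Q x -> Q' x.
Proof.
move=> Qprime [QP [y [Py Qy]]] [[[_ _ Q'M] _ Q'prim] Q'rad] x Qx.
have [[_ _ QM] _ Qmul] := Qprime.
have [n Q'yn] := proj1 (Q'rad y) Py.
case: (Pval x (y ^+ n)) => [[t [c [Pt E]]] | [t [c [Pt E]]]].
  apply: NNPP => Q'x.
  have [m Q'tm] : exists m, Q' (t ^+ m) by apply: Q'prim Q'x; rewrite E; apply: Q'M.
  by apply/Pt/Q'rad; exists m.
have /Qmul [/(prime_mem_expr Qprime) // | /QP //] : Q (y ^+ n * t).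
  by rewrite E; apply: QM.
Qed.

Lemma branched_not_union : branched P -> ~ set_eq P (union_smaller_primes P).
Proof.
move=> [Q [Qprim QP]] PU; apply: QP => x; split.
  by move=> Qx; apply/(proj2 Qprim x); exists 1%N; rewrite expr1.
by move=> /PU [Q' [Q'prime [Q'P Q'x]]]; apply: prime_sub_primary Q'prime Q'P Qprim x Q'x.
Qed.

End ValuationAt.

Section FractionalIdeals.
Variable R : idomainType.
Implicit Types (I M P Q : R -> Prop) (a b x : R).
Local Notation K := {fraction R}.
Local Notation "x %:F" := (@FracField.tofrac R x).
Local Notation tofracs := (map (@FracField.tofrac R)).

Lemma sub_vop (A : K -> Prop) (y : K) : A y -> vop A y.
Proof. by move=> Ax b Hb; rewrite mulrC; apply: Hb. Qed.

Lemma Kgen_mem (L : seq K) y : y \in L -> Kgen L y.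
Proof.
elim: L => // z L IHL; rewrite inE => /orP [/eqP -> | yL].
  exists [:: 1]; rewrite big_ord_recl /= rmorph1 mul1r big1 ?addr0 // => i _.
  by rewrite nth_nil rmorph0 mul0r.
have [c ->] := IHL yL; exists (0 :: c).
by rewrite big_ord_recl /= rmorph0 mul0r add0r.
Qed.

Lemma Kgen_tofrac (l : seq R) (y : K) :
  Kgen (tofracs l) y <-> exists2 r, Rgen l r & y = r%:F.
Proof.
have sum_tofrac (c : seq R) : (\sum_(i < size l) c`_i * l`_i)%:F =
    \sum_(i < size (tofracs l)) (c`_i)%:F * (tofracs l)`_i.
  by rewrite rmorph_sum size_map; apply: eq_bigr => i _; rewrite rmorphM (nth_map 0).
split=> [[c ->] | [r [c ->] ->]]; last by exists c; rewrite sum_tofrac.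
by exists (\sum_(i < size l) c`_i * l`_i); [exists c | rewrite sum_tofrac].
Qed.

Lemma vop_Kgen_tofrac (l : seq R) (y : K) : vop (Kgen (tofracs l)) y -> Rsub y.
Proof.
move=> vy; rewrite -[y]mulr1; apply: vy => z /Kgen_tofrac [r _ ->].
by exists r; rewrite mul1r.
Qed.

Lemma Rsub_seq (L : seq K) : (forall y, y \in L -> Rsub y) -> exists l, L = tofracs l.
Proof.
elim: L => [|y L IHL] LR; first by exists [::].
have [r ->] := LR y (mem_head y L).
have [l ->] := IHL (fun z zL => LR z (mem_behead (zL : z \in behead (y :: L)))).
by exists (r :: l).
Qed.

Lemma Rgen_minimal_v_finite_divisorial P (l : seq R) :
  t_ideal P -> nonzero P -> minimal_prime_of (Rgen l) P ->
  exists I, v_finite_divisorial I /\ minimal_prime_of I P.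
Proof.
move=> tP Pnz lP; have [x [[c Ex] x0]] := minimal_prime_of_nonzero lP Pnz.
have [Pprime RgenP Pmin] := lP.
have lnz : has (fun y => y != 0) (tofracs l).
  apply: contraT => /hasPn l0; move: x0; rewrite Ex big1 ?eqxx // => i _.
  have /negPn := l0 _ (map_f (@FracField.tofrac R) (mem_nth 0 (ltn_ord i))).
  by rewrite tofrac_eq0 => /eqP ->; rewrite mulr0.
exists (fun r => vop (Kgen (tofracs l)) r%:F); split.
  exists (tofracs l); split => // y; split=> [[r [vr ->]] // | vy].
  by have [r Er] := vop_Kgen_tofrac vy; exists r; rewrite -Er.
split => // [r vr | Q Qprime vQ QP].
  have /(tP r%:F) [r' [Pr' /eqP]] : t_closure (ext_ideal P) r%:F.
    exists (tofracs l); split => // y /mapP [b bl ->].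
    by exists b; split => //; apply/RgenP/Rgen_mem.
  by rewrite tofrac_eq => /eqP ->.
apply: Pmin => // r lr; apply/vQ/sub_vop/Kgen_tofrac.
by exists r.
Qed.

Lemma v_finite_divisorial_tofrac I : v_finite_divisorial I ->
  exists l : seq R, [/\ has (fun b => b != 0) l,
    set_eq (ext_ideal I) (vop (Kgen (tofracs l))) & forall b, b \in l -> I b].
Proof.
move=> [L [Lnz IL]].
have LI y : y \in L -> ext_ideal I y by move=> yL; apply/IL/sub_vop/Kgen_mem.
have [l El] : exists l, L = tofracs l.
  by apply: Rsub_seq => y /LI [r [_ ->]]; exists r.
subst L; exists l; split => // [|b bl].
  by rewrite has_map in Lnz; apply: sub_has Lnz => b; rewrite /= tofrac_eq0.
by have [r [Ir /eqP]] := LI _ (map_f _ bl); rewrite tofrac_eq => /eqP ->.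
Qed.

Lemma colon_Kgen_tofrac (l : seq R) s a : a != 0 ->
  (forall b, b \in l -> exists c, s * b = c * a) ->
  colon (@Rsub R) (Kgen (tofracs l)) (s%:F / a%:F).
Proof.
move=> a0 sdiv _ /Kgen_tofrac [r lr ->].
have [e Ee] : exists e, s * r = e * a.
  apply: (Rgen_sub_ideal (J := fun r => exists e, s * r = e * a)) lr => [|b /sdiv //].
  split.
  - by exists 0; rewrite mulr0 mul0r.
  - by move=> x y [e Ex] [e' Ey]; exists (e + e'); rewrite mulrDr Ex Ey mulrDl.
  - by move=> c x [e Ex]; exists (c * e); rewrite mulrCA Ex mulrA.
by exists e; rewrite mulrAC -rmorphM Ee rmorphM mulfK // tofrac_eq0.
Qed.

Lemma v_finite_divisorial_minimal_principal P I :
  valuation_at P -> v_finite_divisorial I -> minimal_prime_of I P ->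
  exists a, minimal_prime_of (principal_ideal a) P.
Proof.
move=> Pval /v_finite_divisorial_tofrac [l [lnz IL lI]] [Pprime IP Pmin].
have [[_ _ PM] _ _] := Pprime.
have l0 : l != [::] by case: (l) lnz.
have [a al adiv] := exists_dvd_at_all Pprime Pval l0.
have [s [Ps sdiv]] := dvd_at_common Pprime adiv.
have s0 : s != 0 by apply: contra_not_neq Ps => ->; case: Pprime => [[]].
have a0 : a != 0.
  apply: contraTneq lnz => a0; apply/hasPn => b /sdiv [c].
  by rewrite a0 mulr0 => /eqP; rewrite mulf_eq0 (negbTE s0) negbK.
exists a; split => // [x [r ->] | Q Qprime aQ QP]; first exact/PM/IP/lI.
apply: Pmin => // x Ix; have [[_ _ QM] _ Qmul] := Qprime.
have [u Eu] : Rsub (x%:F * (s%:F / a%:F)).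
  by apply: (proj1 (IL x%:F)); [exists x | exact: colon_Kgen_tofrac].
have : Q (x * s).
  suff -> : x * s = u * a by apply: aQ; exists u.
  by apply/eqP; rewrite -tofrac_eq !rmorphM /= -Eu mulrA divfK // tofrac_eq0.
by case/Qmul => // /QP.
Qed.

Lemma valuation_at_localization M : is_ideal M -> ~ M 1 ->
  valuation_subring (localization M) -> valuation_at M.
Proof.
move=> [M0 _ _] M1 Mval a b.
have [-> | a0] := eqVneq a 0; first by left; exists 1, 0; split; rewrite ?mul0r.
have [-> | b0] := eqVneq b 0; first by right; exists 1, 0; split; rewrite ?mul0r.
have Mnz t : ~ M t -> t != 0 by apply: contra_not_neq => ->.
have /Mval [[c [t [Mt E]]] | [c [t [Mt E]]]] : a%:F / b%:F != 0.
- by rewrite mulf_neq0 ?invr_eq0 ?tofrac_eq0.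
- left; exists t, c; split => //; apply/eqP; rewrite -tofrac_eq !rmorphM /=.
  by rewrite -eqr_div ?tofrac_eq0 ?(Mnz t) // E.
- right; exists t, c; split => //; apply/eqP; rewrite -tofrac_eq !rmorphM /=.
  by rewrite -eqr_div ?tofrac_eq0 ?(Mnz t) // -E invf_div.
Qed.

Lemma valuation_at_sub P M : (forall x, P x -> M x) -> valuation_at M -> valuation_at P.
Proof.
move=> PM Mval a b.
by case: (Mval a b) => [] [t [c [Mt E]]]; [left | right]; exists t, c; split => // /PM.
Qed.

End FractionalIdeals.

Section TMaximal.
Variable R : idomainType.
Implicit Types (I J P : R -> Prop).
Local Notation K := {fraction R}.
Local Notation "x %:F" := (@FracField.tofrac R x).

Lemma t_closure_monotone (A B : K -> Prop) :
  (forall y, A y -> B y) -> forall y, t_closure A y -> t_closure B y.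
Proof. by move=> AB y [L [LA LBv]]; exists L; split => // z /LA /AB. Qed.

Lemma ext_ideal_monotone I J :
  (forall x, I x -> J x) -> forall y, ext_ideal I y -> ext_ideal J y.
Proof. by move=> IJ y [r [Ir ->]]; exists r; split => //; apply: IJ. Qed.

Section ChainUnion.
Variables (G : (R -> Prop) -> Prop) (J0 : R -> Prop).
Hypotheses (GJ0 : G J0) (Gproper : forall J, G J -> proper_t_ideal J).
Hypothesis Gchain : forall J1 J2, G J1 -> G J2 ->
  (forall x, J1 x -> J2 x) \/ (forall x, J2 x -> J1 x).

Definition chain_union : R -> Prop := fun x => exists2 J, G J & J x.

Lemma chain_union_sup J : G J -> forall x, J x -> chain_union x.
Proof. by move=> GJ x Jx; exists J. Qed.

Lemma chain_union_seq (L : seq K) : (forall y, y \in L -> ext_ideal chain_union y) ->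
  exists2 J, G J & forall y, y \in L -> ext_ideal J y.
Proof.
elim: L => [|y L IHL] LU; first by exists J0.
have [r [[J1 G1 J1r] ->]] := LU y (mem_head y L).
have [J2 G2 LJ2] := IHL (fun z zL => LU z (mem_behead (zL : z \in behead (y :: L)))).
have ext1 : ext_ideal J1 r%:F by exists r.
have [J12 | J21] := Gchain G1 G2.
  exists J2 => [// | z]; rewrite inE => /orP [/eqP -> | /LJ2 //].
  exact: ext_ideal_monotone ext1.
exists J1 => [// | z]; rewrite inE => /orP [/eqP -> // | /LJ2].
exact: ext_ideal_monotone.
Qed.

Lemma chain_union_proper_t_ideal : proper_t_ideal chain_union.
Proof.
have Gideal J : G J -> is_ideal J by case/Gproper.
split.
- split; first by exists J0 => //; case: (Gideal _ GJ0).
  + move=> a b [J1 G1 J1a] [J2 G2 J2b].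
    have [J12 | J21] := Gchain G1 G2.
      by exists J2 => //; case: (Gideal _ G2) => _ + _; apply => //; apply: J12.
    by exists J1 => //; case: (Gideal _ G1) => _ + _; apply => //; apply: J21.
  + by move=> r a [J GJ Ja]; exists J => //; case: (Gideal _ GJ) => _ _; apply.
- by have [_ [b [Jb b0]] _ _] := Gproper GJ0; exists b; split => //; exists J0.
- by move=> [J GJ J1]; case: (Gproper GJ).
move=> y; split.
  move=> [r [[J GJ Jr] ->]]; have [_ _ _ tJ] := Gproper GJ.
  apply: (t_closure_monotone (ext_ideal_monotone (chain_union_sup GJ))).
  by apply/tJ; exists r.
move=> [L [LU Lv]]; have [J GJ LJ] := chain_union_seq LU.
have [_ _ _ tJ] := Gproper GJ.
by apply: (ext_ideal_monotone (chain_union_sup GJ)); apply/tJ; exists L.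
Qed.

End ChainUnion.

Lemma proper_t_ideal_sub_t_maximal P :
  proper_t_ideal P -> exists M, t_maximal M /\ forall x, P x -> M x.
Proof.
move=> Pproper.
pose T := {J : R -> Prop | proper_t_ideal J /\ forall x, P x -> J x}.
pose le (J1 J2 : T) := boolp.asbool (forall x, sval J1 x -> sval J2 x).
have [M Mmax] : exists M, classical_sets.premaximal le M.
  apply: (@classical_sets.ZL_preorder T (exist _ P (conj Pproper (fun x Px => Px)))).
  - by move=> J; apply/boolp.asboolP.
  - by move=> J1 J2 J3 /boolp.asboolP J12 /boolp.asboolP J23; apply/boolp.asboolP => x /J12 /J23.
  move=> A Achain.
  pose G J := J = P \/ exists2 s, A s & J = sval s.
  have GP J : G J -> proper_t_ideal J /\ forall x, P x -> J x.
    by case=> [-> | [s _ ->]]; [split | exact: proj2_sig s].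
  have Gchain J1 J2 : G J1 -> G J2 ->
      (forall x, J1 x -> J2 x) \/ (forall x, J2 x -> J1 x).
    case=> [-> | [s As ->]] [-> | [s' As' ->]]; [by left | | |].
    - by left; case: (proj2_sig s').
    - by right; case: (proj2_sig s).
    - by case: (Achain _ _ As As') => /boolp.asboolP; [left | right].
  have GU := chain_union_proper_t_ideal (or_introl erefl) (fun J GJ => proj1 (GP J GJ)) Gchain.
  have PU : forall x, P x -> chain_union G x by move=> x Px; exists P => //; left.
  exists (exist _ (chain_union G) (conj GU PU) : T) => s As; apply/boolp.asboolP => x sx.
  by exists (sval s) => //; right; exists s.
have [Mproper PM] := proj2_sig M; exists (sval M); split => //; split => // J Jproper MJ.
have PJ x : P x -> J x by move/PM/MJ.
have /Mmax /boolp.asboolP JM : le M (exist _ J (conj Jproper PJ)) by apply/boolp.asboolP.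
by move=> x; split; [apply: JM | apply: MJ].
Qed.

End TMaximal.

Theorem proposition1p2 (R : idomainType)
  (HRK : exists x : {fraction R}, ~ Rsub x)   (* K <> R *)
  (HR : PvMD R) (P : R -> Prop) (HP : t_prime P) :
  [<->
    branched P;
    exists a : R, minimal_prime_of (principal_ideal a) P;
    exists l : seq R, minimal_prime_of (Rgen l) P;
    exists I : R -> Prop, v_finite_divisorial I /\ minimal_prime_of I P;
    ~ set_eq P (fun x => exists Q, is_prime Q /\ strict_subset Q P /\ Q x)].
Proof.
have [Pprime Pnz tP] := HP; have [Pideal P1 _] := Pprime.
have [M [Mmax PM]] := @proper_t_ideal_sub_t_maximal R P (And4 Pideal Pnz P1 tP).
have [[Mideal _ M1 _] _] := Mmax.
have Pval := valuation_at_sub PM (valuation_at_localization Mideal M1 (HR M Mmax)).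
tfae.
- by move/(branched_not_union Pval); apply: not_union_minimal_principal.
- by move=> [a]; apply: minimal_prime_principal_Rgen.
- by move=> [l]; apply: Rgen_minimal_v_finite_divisorial.
- move=> [I [Ivfd IP]].
  have [a aP] := v_finite_divisorial_minimal_principal Pval Ivfd IP.
  exact/(branched_not_union Pval)/(minimal_prime_principal_branched Pprime Pval Pnz aP).
- move/(not_union_minimal_principal Pprime) => [a].
  exact: minimal_prime_principal_branched.
Qed.
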